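(* Let $\mathcal{D}$ be a small category and $E$ an effect algebra. The functor $E\otimes-\colon\mathbf{EA}\to\mathbf{EA}$ preserves all colimits over $\mathcal{D}$ if and only if $\mathcal{D}$ is connected, or $E\cong\underline{2}$, or $E\cong\underline{1}$ and $\mathcal{D}$ is nonempty.
   Context: $\mathbf{EA}$ is the category of effect algebras (partial algebras $(E;\oplus,',0,1)$ with $\oplus$ commutative and associative as Kleene identities, $a\oplus b=1$ iff $b=a'$, $a\oplus 1$ defined iff $a=0$) with homomorphisms preserving existing orthosums and $1$; it is cocomplete. $E\otimes F$ denotes the tensor product: the effect algebra with a bihomomorphism $E\times F\to E\otimes F$ (a map additive on existing orthosums in each variable with $1\otimes1=1$) through which every bihomomorphism factors uniquely; $E\otimes-$ is the induced functor. $\underline{2}=\{0,1\}$ is the two-element effect algebra (initial object and tensor unit), and $\underline{1}$ is the one-element effect algebra (terminal object). A category is connected if it is nonempty and any two objects are joined by a zigzag of morphisms. A functor $\Phi$ preserves colimits over $\mathcal{D}$ if for every functor $F\colon\mathcal{D}\to\mathbf{EA}$ and every colimiting cocone $(F(d)\to G)_d$, the cocone $(\Phi F(d)\to\Phi(G))_d$ is colimiting. *)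

Set Implicit Arguments.
Unset Strict Implicit.

Definition obind {A B : Type} (o : option A) (f : A -> option B) : option B :=
  match o with Some a => f a | None => None end.

(* The partial operation (+) is a total function into [option]; [None] means
   "undefined".  Associativity is the Kleene identity (both sides defined
   simultaneously and then equal). *)
Record EffectAlgebra := {
  ea_car :> Type;
  ea_sum : ea_car -> ea_car -> option ea_car;
  ea_compl : ea_car -> ea_car;
  ea_zero : ea_car;
  ea_one : ea_car;
  ea_comm : forall a b, ea_sum a b = ea_sum b a;
  ea_assoc : forall a b c,
      obind (ea_sum a b) (fun ab => ea_sum ab c)
      = obind (ea_sum b c) (fun bc => ea_sum a bc);
  ea_compl_spec : forall a b, ea_sum a b = Some ea_one <-> b = ea_compl a;
  ea_zero_one : forall a, ea_sum a ea_one <> None <-> a = ea_zero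
}.

Arguments ea_sum {e}.
Arguments ea_one {e}.
Arguments ea_zero {e}.
Arguments ea_compl {e}.

Definition is_hom (E F : EffectAlgebra) (f : E -> F) : Prop :=
  f ea_one = ea_one /\
  forall a b c, ea_sum a b = Some c -> ea_sum (f a) (f b) = Some (f c).

Definition ea_iso (E F : EffectAlgebra) : Prop :=
  exists (f : E -> F) (g : F -> E),
    is_hom f /\ is_hom g /\ (forall x, g (f x) = x) /\ (forall y, f (g y) = y).

Definition is_bihom (E F G : EffectAlgebra) (t : E -> F -> G) : Prop :=
  (forall y a b c, ea_sum a b = Some c -> ea_sum (t a y) (t b y) = Some (t c y)) /\
  (forall x a b c, ea_sum a b = Some c -> ea_sum (t x a) (t x b) = Some (t x c)) /\
  t ea_one ea_one = ea_one.

Definition is_tensor (E F T : EffectAlgebra) (t : E -> F -> T) : Prop :=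
  is_bihom t /\
  forall (G : EffectAlgebra) (g : E -> F -> G), is_bihom g ->
    exists h : T -> G,
      is_hom h /\ (forall x y, h (t x y) = g x y) /\
      (forall h' : T -> G, is_hom h' -> (forall x y, h' (t x y) = g x y) ->
         forall z, h' z = h z).

Definition two_sum (a b : bool) : option bool :=
  match a, b with
  | false, x => Some x
  | true, false => Some true
  | true, true => None
  end.

Lemma two_comm : forall a b, two_sum a b = two_sum b a.
Proof. intros [|] [|]; reflexivity. Qed.
Lemma two_assoc : forall a b c,
  obind (two_sum a b) (fun ab => two_sum ab c)
  = obind (two_sum b c) (fun bc => two_sum a bc).
Proof. intros [|] [|] [|]; reflexivity. Qed.
Lemma two_compl : forall a b, two_sum a b = Some true <-> b = negb a.
Proof. intros [|] [|]; simpl; split; congruence. Qed.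
Lemma two_zero_one : forall a, two_sum a true <> None <-> a = false.
Proof. intros [|]; simpl; split; congruence. Qed.

Definition two : EffectAlgebra :=
  {| ea_car := bool; ea_sum := two_sum; ea_compl := negb;
     ea_zero := false; ea_one := true;
     ea_comm := two_comm; ea_assoc := two_assoc;
     ea_compl_spec := two_compl; ea_zero_one := two_zero_one |}.

Definition one_sum (a b : unit) : option unit := Some tt.
Lemma one_comm : forall a b, one_sum a b = one_sum b a.
Proof. reflexivity. Qed.
Lemma one_assoc : forall a b c,
  obind (one_sum a b) (fun ab => one_sum ab c)
  = obind (one_sum b c) (fun bc => one_sum a bc).
Proof. reflexivity. Qed.
Lemma one_compl : forall a b, one_sum a b = Some tt <-> b = (fun x => x) a.
Proof. intros [] []; split; reflexivity. Qed.
Lemma one_zero_one : forall a, one_sum a tt <> None <-> a = tt.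
Proof. intros []; split; [reflexivity | discriminate]. Qed.

Definition one : EffectAlgebra :=
  {| ea_car := unit; ea_sum := one_sum; ea_compl := fun x => x;
     ea_zero := tt; ea_one := tt;
     ea_comm := one_comm; ea_assoc := one_assoc;
     ea_compl_spec := one_compl; ea_zero_one := one_zero_one |}.

Record SmallCategory := {
  Obj : Type;
  Hom : Obj -> Obj -> Type;
  cid : forall a, Hom a a;
  ccomp : forall a b c, Hom b c -> Hom a b -> Hom a c;
  ccomp_id_l : forall a b (f : Hom a b), ccomp (cid b) f = f;
  ccomp_id_r : forall a b (f : Hom a b), ccomp f (cid a) = f;
  ccomp_assoc : forall a b c d (h : Hom c d) (g : Hom b c) (f : Hom a b),
      ccomp h (ccomp g f) = ccomp (ccomp h g) f
}.

Arguments Hom {s}.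
Arguments cid {s}.
Arguments ccomp {s a b c}.

Inductive zigzag (D : SmallCategory) : Obj D -> Obj D -> Prop :=
| zz_refl : forall a, zigzag a a
| zz_fwd : forall a b c, Hom a b -> zigzag b c -> zigzag a c
| zz_bwd : forall a b c, Hom b a -> zigzag b c -> zigzag a c.

Definition connected (D : SmallCategory) : Prop :=
  inhabited (Obj D) /\ forall a b : Obj D, zigzag a b.

Record Diagram (D : SmallCategory) := {
  dobj : Obj D -> EffectAlgebra;
  dmap : forall a b, Hom a b -> dobj a -> dobj b;
  dmap_hom : forall a b (f : Hom a b), is_hom (dmap f);
  dmap_id : forall a x, dmap (cid a) x = x;
  dmap_comp : forall a b c (g : Hom b c) (f : Hom a b) x,
      dmap (ccomp g f) x = dmap g (dmap f x)
}.

Arguments dmap {D} d {a b}.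

(* Cocones and colimits are stated for raw data (object and morphism maps);
   functoriality is not needed for these notions. *)
Definition is_cocone (D : SmallCategory) (Fo : Obj D -> EffectAlgebra)
  (Fm : forall a b, Hom a b -> Fo a -> Fo b)
  (G : EffectAlgebra) (c : forall d, Fo d -> G) : Prop :=
  (forall d, is_hom (c d)) /\
  (forall a b (f : Hom a b) x, c b (Fm a b f x) = c a x).

Definition is_colimit (D : SmallCategory) (Fo : Obj D -> EffectAlgebra)
  (Fm : forall a b, Hom a b -> Fo a -> Fo b)
  (G : EffectAlgebra) (c : forall d, Fo d -> G) : Prop :=
  is_cocone Fm c /\
  forall (G' : EffectAlgebra) (c' : forall d, Fo d -> G'),
    is_cocone Fm c' ->
    exists u : G -> G',
      is_hom u /\ (forall d x, u (c d x) = c' d x) /\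
      (forall u' : G -> G', is_hom u' -> (forall d x, u' (c d x) = c' d x) ->
         forall z, u' z = u z).

(** [E (x) -] preserves colimits over [D]: for every diagram [F], every
    colimiting cocone [c], and every choice of tensor products
    [E (x) F d], [E (x) G] (unique up to iso), the image diagram with the
    induced maps [id (x) F f] and cocone [id (x) c_d] is colimiting.  The
    induced maps are characterised by their action on pure tensors. *)
Definition tensor_preserves_colimits_over (E : EffectAlgebra) (D : SmallCategory) : Prop :=
  forall (F : Diagram D) (G : EffectAlgebra) (c : forall d, dobj F d -> G),
    is_colimit (fun a b f => dmap F f) c ->
    forall (TF : Obj D -> EffectAlgebra) (tF : forall d, E -> dobj F d -> TF d),
      (forall d, is_tensor (tF d)) ->
    forall (TG : EffectAlgebra) (tG : E -> G -> TG), is_tensor tG ->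
    forall (m : forall a b, Hom a b -> TF a -> TF b),
      (forall a b (f : Hom a b), is_hom (m a b f)) ->
      (forall a b (f : Hom a b) e x, m a b f (tF a e x) = tF b e (dmap F f x)) ->
    forall (h : forall d, TF d -> TG),
      (forall d, is_hom (h d)) ->
      (forall d e x, h d (tF d e x) = tG e (c d x)) ->
      is_colimit m h.

(* If [D] is connected, a cocone [c'] out of the [E ⊗ F d] determines elements
   [k e = c'_d (e ⊗ 1)] independent of [d].  For fixed [e] the maps [c'_d (e ⊗ -)]
   are additive with value [k e] at 1, i.e. homomorphisms into the interval
   [[0, k e]], so they factor through the colimit [G]; the factorisations add up in
   [e] and form a bimorphism [E × G -> G'], that is, a map out of [E ⊗ G].  When
   [E ≅ 2] the values [k e] are forced because [2] is initial, and when [E ≅ 1]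
   every cocone (over a nonempty [D]) lands in a trivial algebra.
   Conversely, [2] is the colimit of the constant diagram at [2] over any [D], so
   preservation makes [E] the colimit of the constant diagram at [E] with identity
   coprojections.  Over the empty category this says that [E] is initial, i.e.
   [E ≅ 2]; over a disconnected one the two coprojections of the horizontal sum
   [E ∨ E] would have to agree, which leaves no element of [E] besides 0 and 1. *)

From Stdlib Require Import Classical ClassicalEpsilon ProofIrrelevance Bool.
Set Implicit Arguments.
Unset Strict Implicit.

Section EffectAlgebraFacts.
Variable E : EffectAlgebra.
Implicit Types a b c d k x y z : E.

Lemma sum_assoc_fwd a b c ab d :
  ea_sum a b = Some ab -> ea_sum ab c = Some d ->
  exists bc, ea_sum b c = Some bc /\ ea_sum a bc = Some d.
Proof.
  intros Hab Habc. pose proof (ea_assoc a b c) as H.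
  rewrite Hab in H; simpl in H; rewrite Habc in H.
  destruct (ea_sum b c) as [bc|]; simpl in H; [eauto | discriminate].
Qed.

Lemma sum_assoc_bwd a b c bc d :
  ea_sum b c = Some bc -> ea_sum a bc = Some d ->
  exists ab, ea_sum a b = Some ab /\ ea_sum ab c = Some d.
Proof.
  intros Hbc Habc. pose proof (ea_assoc a b c) as H.
  rewrite Hbc in H; simpl in H; rewrite Habc in H.
  destruct (ea_sum a b) as [ab|]; simpl in H; [eauto | discriminate].
Qed.

Lemma sum_compl a : ea_sum a (ea_compl a) = Some ea_one.
Proof. apply ea_compl_spec; reflexivity. Qed.

Lemma compl_eq a b : ea_sum a b = Some ea_one -> b = ea_compl a.
Proof. apply ea_compl_spec. Qed.

Lemma complK a : ea_compl (ea_compl a) = a.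
Proof. symmetry. apply compl_eq. rewrite ea_comm. apply sum_compl. Qed.

Lemma compl_one : ea_compl ea_one = (ea_zero : E).
Proof. apply ea_zero_one. rewrite ea_comm, sum_compl. discriminate. Qed.

Lemma compl_zero : ea_compl ea_zero = (ea_one : E).
Proof. rewrite <- compl_one. apply complK. Qed.

Lemma sum_zero_r a : ea_sum a ea_zero = Some a.
Proof.
  assert (H1 : ea_sum ea_one ea_zero = Some (ea_one : E)).
  { rewrite <- compl_one. apply sum_compl. }
  assert (H2 : ea_sum (ea_compl a) a = Some ea_one).
  { rewrite ea_comm. apply sum_compl. }
  destruct (sum_assoc_fwd H2 H1) as (b & Hb & Hb1).
  apply compl_eq in Hb1. rewrite complK in Hb1. subst b. exact Hb.
Qed.

Lemma sum_zero_l a : ea_sum ea_zero a = Some a.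
Proof. rewrite ea_comm. apply sum_zero_r. Qed.

Lemma sum_cancel_l a b c x : ea_sum a b = Some x -> ea_sum a c = Some x -> b = c.
Proof.
  intros Hb Hc.
  destruct (sum_assoc_fwd Hb (sum_compl x)) as (b1 & Hb1 & Hb2).
  destruct (sum_assoc_fwd Hc (sum_compl x)) as (c1 & Hc1 & Hc2).
  apply compl_eq in Hb2. apply compl_eq in Hc2. subst b1 c1.
  assert (Ha : ea_sum (ea_compl a) a = Some ea_one) by (rewrite ea_comm; apply sum_compl).
  destruct (sum_assoc_fwd Hb1 Ha) as (w & Hw & Hbw).
  destruct (sum_assoc_fwd Hc1 Ha) as (w' & Hw' & Hcw).
  rewrite Hw in Hw'. injection Hw' as <-.
  apply compl_eq in Hbw. apply compl_eq in Hcw.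
  rewrite <- (complK b), <- (complK c), <- Hbw, <- Hcw. reflexivity.
Qed.

Lemma sum_eq_zero_l a b : ea_sum a b = Some ea_zero -> a = ea_zero.
Proof.
  intro Hab.
  destruct (sum_assoc_fwd Hab (sum_zero_l ea_one)) as (b1 & Hb1 & _).
  assert (b = ea_zero) as -> by (apply ea_zero_one; congruence).
  rewrite sum_zero_r in Hab. congruence.
Qed.

Lemma sum_one_l b c : ea_sum ea_one b = Some c -> b = ea_zero.
Proof. intro H. apply ea_zero_one. rewrite ea_comm, H. discriminate. Qed.

Lemma trivial_eq (H01 : ea_zero = (ea_one : E)) a b : a = b.
Proof.
  assert (Hz : forall x, x = ea_zero).
  { intro x. apply ea_zero_one. rewrite <- H01, sum_zero_r. discriminate. }
  rewrite (Hz a), (Hz b). reflexivity.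
Qed.

Definition ea_le a b : Prop := exists z, ea_sum a z = Some b.

Lemma ea_le_refl a : ea_le a a.
Proof. exists ea_zero. apply sum_zero_r. Qed.

Lemma ea_le0x a : ea_le ea_zero a.
Proof. exists a. apply sum_zero_l. Qed.

Lemma ea_le_sum_r a b c : ea_sum a b = Some c -> ea_le b c.
Proof. intro H. exists a. rewrite ea_comm. exact H. Qed.

Lemma ea_le_trans a b c : ea_le a b -> ea_le b c -> ea_le a c.
Proof.
  intros [z1 H1] [z2 H2]. destruct (sum_assoc_fwd H1 H2) as (w & _ & Hw).
  exists w. exact Hw.
Qed.

Lemma ea_le_antisym a b : ea_le a b -> ea_le b a -> a = b.
Proof.
  intros [z1 H1] [z2 H2]. destruct (sum_assoc_fwd H1 H2) as (w & Hw & Haw).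
  assert (w = ea_zero) as -> by exact (sum_cancel_l Haw (sum_zero_r a)).
  apply sum_eq_zero_l in Hw. subst z1. rewrite sum_zero_r in H1. congruence.
Qed.

Lemma sum_shuffle a b c d x y z :
  ea_sum a b = Some x -> ea_sum c d = Some y -> ea_sum x y = Some z ->
  exists p q, ea_sum a c = Some p /\ ea_sum b d = Some q /\ ea_sum p q = Some z.
Proof.
  intros Hx Hy Hz.
  destruct (sum_assoc_fwd Hx Hz) as (by_ & Hby & Haby).
  rewrite ea_comm in Hby.
  destruct (sum_assoc_fwd Hy Hby) as (db & Hdb & Hcdb).
  destruct (sum_assoc_bwd Hcdb Haby) as (p & Hp & Hpz).
  exists p, db. rewrite ea_comm in Hdb. auto.
Qed.

Lemma sum_defined_below a b k1 k2 k :
  ea_le a k1 -> ea_le b k2 -> ea_sum k1 k2 = Some k -> exists z, ea_sum a b = Some z.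
Proof.
  intros [z1 H1] [z2 H2] Hk.
  destruct (sum_shuffle H1 H2 Hk) as (p & q & Hp & _). eauto.
Qed.

End EffectAlgebraFacts.

Definition additive (A B : EffectAlgebra) (f : A -> B) : Prop :=
  forall a b c, ea_sum a b = Some c -> ea_sum (f a) (f b) = Some (f c).

Lemma additive_zero (A B : EffectAlgebra) (f : A -> B) : additive f -> f ea_zero = ea_zero.
Proof.
  intro Hf. apply (sum_cancel_l (Hf _ _ _ (sum_zero_r ea_zero))). apply sum_zero_r.
Qed.

Lemma additive_le_one (A B : EffectAlgebra) (f : A -> B) a : additive f -> ea_le (f a) (f ea_one).
Proof. intro Hf. exists (f (ea_compl a)). apply Hf, sum_compl. Qed.

Lemma hom_zero (A B : EffectAlgebra) (f : A -> B) : is_hom f -> f ea_zero = ea_zero.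
Proof. intros [_ Hf]. exact (additive_zero Hf). Qed.

Lemma hom_id (A : EffectAlgebra) : is_hom (fun a : A => a).
Proof. split; auto. Qed.

Lemma hom_comp (A B C : EffectAlgebra) (f : A -> B) (g : B -> C) :
  is_hom f -> is_hom g -> is_hom (fun a => g (f a)).
Proof.
  intros [Hf1 Hf] [Hg1 Hg]. split.
  - rewrite Hf1. exact Hg1.
  - intros a b c H. apply Hg, Hf, H.
Qed.

Lemma hom_trivial (A B : EffectAlgebra) (f : A -> B) :
  is_hom f -> ea_zero = (ea_one : A) -> ea_zero = (ea_one : B).
Proof. intros Hf H01. rewrite <- (hom_zero Hf), H01. apply Hf. Qed.

Lemma hom_into_trivial (A B : EffectAlgebra) (f : A -> B) : ea_zero = (ea_one : B) -> is_hom f.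
Proof.
  intro H01. split; [apply (trivial_eq H01) |].
  intros a b c _.
  rewrite (trivial_eq H01 (f b) ea_zero), (trivial_eq H01 (f c) (f a)). apply sum_zero_r.
Qed.

Lemma bihom_zero_l (A B C : EffectAlgebra) (t : A -> B -> C) b :
  is_bihom t -> t ea_zero b = ea_zero.
Proof. intros [Ht _]. exact (additive_zero (Ht b)). Qed.

Lemma bihom_additive_r (A B C : EffectAlgebra) (t : A -> B -> C) a : is_bihom t -> additive (t a).
Proof. intros (_ & Ht & _). exact (Ht a). Qed.

Lemma bihom_hom_l (A B C : EffectAlgebra) (t : A -> B -> C) :
  is_bihom t -> is_hom (fun a => t a ea_one).
Proof. intros (Ht & _ & Ht1). split; [exact Ht1 | exact (Ht ea_one)]. Qed.

Lemma bihom_post (A B C D : EffectAlgebra) (t : A -> B -> C) (q : C -> D) :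
  is_hom q -> is_bihom t -> is_bihom (fun a b => q (t a b)).
Proof.
  intros [Hq1 Hq] (Htl & Htr & Ht1). split; [|split].
  - intros b a1 a2 a3 H. apply Hq, Htl, H.
  - intros a b1 b2 b3 H. apply Hq, Htr, H.
  - rewrite Ht1. exact Hq1.
Qed.

Lemma tensor_hom_ext (A B T D : EffectAlgebra) (t : A -> B -> T) (p q : T -> D) :
  is_tensor t -> is_hom p -> is_hom q -> (forall a b, p (t a b) = q (t a b)) ->
  forall z, p z = q z.
Proof.
  intros [Ht Huniv] Hp Hq Hpq z.
  destruct (Huniv D (fun a b => q (t a b)) (bihom_post Hq Ht)) as (u & _ & _ & Hu).
  rewrite (Hu p Hp Hpq z), (Hu q Hq (fun _ _ => eq_refl) z). reflexivity.
Qed.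

Definition two_to (A : EffectAlgebra) (b : two) : A := if b then ea_one else ea_zero.

Lemma two_to_hom (A : EffectAlgebra) : is_hom (two_to A).
Proof.
  split; [reflexivity |].
  intros [|] [|] c H; simpl in H; try discriminate; injection H as <-; simpl.
  - apply sum_zero_r.
  - apply sum_zero_l.
  - apply sum_zero_r.
Qed.

Lemma two_hom_unique (A : EffectAlgebra) (u : two -> A) : is_hom u -> forall b, u b = two_to A b.
Proof. intros Hu [|]; [apply Hu | apply (hom_zero Hu)]. Qed.

Lemma iso_two_hom_unique (E A : EffectAlgebra) (f g : E -> A) :
  ea_iso E two -> is_hom f -> is_hom g -> forall e, f e = g e.
Proof.
  intros (phi & psi & _ & Hpsi & Hpsiphi & _) Hf Hg e.
  rewrite <- (Hpsiphi e).
  rewrite (two_hom_unique (hom_comp Hpsi Hf)), (two_hom_unique (hom_comp Hpsi Hg)).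
  reflexivity.
Qed.

Lemma trivial_of_iso_one (E : EffectAlgebra) : ea_iso E one -> ea_zero = (ea_one : E).
Proof.
  intros (phi & psi & _ & _ & Hpsiphi & _).
  rewrite <- (Hpsiphi ea_zero), <- (Hpsiphi ea_one).
  destruct (phi ea_zero), (phi ea_one). reflexivity.
Qed.

Lemma iso_one_of_trivial (E : EffectAlgebra) : ea_zero = (ea_one : E) -> ea_iso E one.
Proof.
  intro H01. exists (fun _ => tt), (fun _ => ea_one). split; [|split; [|split]].
  - apply hom_into_trivial. reflexivity.
  - apply hom_into_trivial. exact H01.
  - intro x. apply (trivial_eq H01).
  - intros []. reflexivity.
Qed.

Lemma iso_two_of_bivalent (E : EffectAlgebra) :
  ea_zero <> (ea_one : E) -> (forall x : E, x = ea_zero \/ x = ea_one) -> ea_iso E two.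
Proof.
  intros H01 Hx.
  pose (phi := fun x : E => if excluded_middle_informative (x = ea_one) then true else false).
  assert (Hphi1 : phi ea_one = true).
  { unfold phi. destruct (excluded_middle_informative _); congruence. }
  assert (Hphi0 : phi ea_zero = false).
  { unfold phi. destruct (excluded_middle_informative _); congruence. }
  exists phi, (two_to E). split; [split | split; [apply two_to_hom | split]].
  - exact Hphi1.
  - intros a b c H.
    destruct (Hx a) as [-> | ->]; destruct (Hx b) as [-> | ->].
    + rewrite sum_zero_r in H. injection H as <-. rewrite Hphi0. reflexivity.
    + rewrite sum_zero_l in H. injection H as <-. rewrite Hphi0, Hphi1. reflexivity.
    + rewrite sum_zero_r in H. injection H as <-. rewrite Hphi0, Hphi1. reflexivity.
    + exfalso. apply H01. symmetry. exact (sum_one_l H).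
  - intro x. destruct (Hx x) as [-> | ->]; [rewrite Hphi0 | rewrite Hphi1]; reflexivity.
  - intros [|]; [exact Hphi1 | exact Hphi0].
Qed.

Lemma kleene_assoc_of_fwd (T : Type) (s : T -> T -> option T) :
  (forall x y, s x y = s y x) ->
  (forall x y w a v, s x y = Some a -> s a w = Some v ->
     exists b, s y w = Some b /\ s x b = Some v) ->
  forall x y w, obind (s x y) (fun a => s a w) = obind (s y w) (fun b => s x b).
Proof.
  intros Hcomm Hfwd x y w.
  destruct (s x y) as [a|] eqn:Ha; simpl.
  - destruct (s a w) as [v|] eqn:Hv.
    + destruct (Hfwd _ _ _ _ _ Ha Hv) as (b & -> & Hb). exact (eq_sym Hb).
    + destruct (s y w) as [b|] eqn:Hb; simpl; [|reflexivity].
      destruct (s x b) as [v|] eqn:Hxb; [|reflexivity].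
      rewrite Hcomm in Hb, Hxb.
      destruct (Hfwd _ _ _ _ _ Hb Hxb) as (a' & Ha' & Hv').
      rewrite Hcomm, Ha in Ha'. injection Ha' as <-. rewrite Hcomm, Hv in Hv'. discriminate.
  - destruct (s y w) as [b|] eqn:Hb; simpl; [|reflexivity].
    destruct (s x b) as [v|] eqn:Hxb; [|reflexivity].
    rewrite Hcomm in Hb, Hxb.
    destruct (Hfwd _ _ _ _ _ Hb Hxb) as (a' & Ha' & _).
    rewrite Hcomm, Ha in Ha'. discriminate.
Qed.

(* Operations on an ambient type, with the effect algebra axioms required only for
   elements satisfying [pe_mem]; [pred_ea] is the resulting algebra on the subtype. *)
Record PredEA := {
  pe_car : Type;
  pe_mem : pe_car -> Prop;
  pe_sum : pe_car -> pe_car -> option pe_car;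
  pe_compl : pe_car -> pe_car;
  pe_zero : pe_car;
  pe_one : pe_car;
  pe_mem_zero : pe_mem pe_zero;
  pe_mem_one : pe_mem pe_one;
  pe_mem_compl : forall x, pe_mem x -> pe_mem (pe_compl x);
  pe_mem_sum : forall x y z, pe_mem x -> pe_mem y -> pe_sum x y = Some z -> pe_mem z;
  pe_comm : forall x y, pe_sum x y = pe_sum y x;
  pe_assoc : forall x y w a v, pe_mem x -> pe_mem y -> pe_mem w ->
    pe_sum x y = Some a -> pe_sum a w = Some v ->
    exists b, pe_sum y w = Some b /\ pe_sum x b = Some v;
  pe_compl_spec : forall x y, pe_mem x -> pe_mem y ->
    (pe_sum x y = Some pe_one <-> y = pe_compl x);
  pe_zero_one : forall x, pe_mem x -> (pe_sum x pe_one <> None <-> x = pe_zero)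
}.

Section PredEffectAlgebra.
Variable P : PredEA.

Definition pe_elt : Type := {x : pe_car P | @pe_mem P x}.

Definition pe_restrict (o : option (pe_car P)) : option pe_elt :=
  match o with
  | Some z =>
      match excluded_middle_informative (@pe_mem P z) with
      | left Hz => Some (exist _ z Hz)
      | right _ => None
      end
  | None => None
  end.

Definition elt_sum (x y : pe_elt) : option pe_elt :=
  pe_restrict (@pe_sum P (proj1_sig x) (proj1_sig y)).

Lemma elt_eq (x y : pe_elt) : proj1_sig x = proj1_sig y -> x = y.
Proof.
  destruct x as [x Hx], y as [y Hy]; simpl; intros ->. f_equal. apply proof_irrelevance.
Qed.

Lemma elt_sum_val (x y : pe_elt) :
  option_map (@proj1_sig _ _) (elt_sum x y) = @pe_sum P (proj1_sig x) (proj1_sig y).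
Proof.
  unfold elt_sum. destruct (@pe_sum P _ _) as [z|] eqn:Hz; [simpl | reflexivity].
  destruct (excluded_middle_informative (@pe_mem P z)) as [|Hnz]; [reflexivity |].
  exfalso. exact (Hnz (pe_mem_sum (proj2_sig x) (proj2_sig y) Hz)).
Qed.

Lemma elt_sum_some (x y z : pe_elt) :
  elt_sum x y = Some z <-> @pe_sum P (proj1_sig x) (proj1_sig y) = Some (proj1_sig z).
Proof.
  rewrite <- elt_sum_val. split; intro H; [rewrite H; reflexivity |].
  destruct (elt_sum x y) as [w|]; simpl in H; [|discriminate].
  injection H as H. rewrite (elt_eq H). reflexivity.
Qed.

Lemma elt_sum_none (x y : pe_elt) :
  elt_sum x y = None <-> @pe_sum P (proj1_sig x) (proj1_sig y) = None.
Proof.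
  rewrite <- elt_sum_val. destruct (elt_sum x y); simpl; split; congruence.
Qed.

Definition elt_compl (x : pe_elt) : pe_elt :=
  exist _ (@pe_compl P (proj1_sig x)) (pe_mem_compl (proj2_sig x)).
Definition elt_zero : pe_elt := exist _ (pe_zero P) (pe_mem_zero P).
Definition elt_one : pe_elt := exist _ (pe_one P) (pe_mem_one P).

Lemma elt_sum_comm (x y : pe_elt) : elt_sum x y = elt_sum y x.
Proof. unfold elt_sum. rewrite pe_comm. reflexivity. Qed.

Lemma elt_sum_assoc (x y w : pe_elt) :
  obind (elt_sum x y) (fun a => elt_sum a w) = obind (elt_sum y w) (fun b => elt_sum x b).
Proof.
  apply (kleene_assoc_of_fwd elt_sum_comm).
  clear x y w. intros x y w a v Ha Hv. apply elt_sum_some in Ha, Hv.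
  destruct (pe_assoc (proj2_sig x) (proj2_sig y) (proj2_sig w) Ha Hv) as (b & Hb & Hxb).
  exists (exist _ b (pe_mem_sum (proj2_sig y) (proj2_sig w) Hb)).
  split; apply elt_sum_some; assumption.
Qed.

Lemma elt_compl_spec (x y : pe_elt) : elt_sum x y = Some elt_one <-> y = elt_compl x.
Proof.
  rewrite elt_sum_some. simpl. rewrite (pe_compl_spec (proj2_sig x) (proj2_sig y)).
  split; intro H; [apply elt_eq, H | rewrite H; reflexivity].
Qed.

Lemma elt_zero_one (x : pe_elt) : elt_sum x elt_one <> None <-> x = elt_zero.
Proof.
  split.
  - intro Hdef. apply elt_eq, (pe_zero_one (proj2_sig x)).
    intro Hnone. apply Hdef, elt_sum_none, Hnone.
  - intros -> Hnone. apply elt_sum_none in Hnone.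
    exact (proj2 (pe_zero_one (pe_mem_zero P)) eq_refl Hnone).
Qed.

Definition pred_ea : EffectAlgebra :=
  {| ea_car := pe_elt; ea_sum := elt_sum; ea_compl := elt_compl;
     ea_zero := elt_zero; ea_one := elt_one;
     ea_comm := elt_sum_comm; ea_assoc := elt_sum_assoc;
     ea_compl_spec := elt_compl_spec; ea_zero_one := elt_zero_one |}.

Lemma pred_ea_hom (A : EffectAlgebra) (f : A -> pe_car P) (Hf : forall a, @pe_mem P (f a)) :
  f ea_one = pe_one P ->
  (forall a b c, ea_sum a b = Some c -> @pe_sum P (f a) (f b) = Some (f c)) ->
  is_hom (fun a => exist _ (f a) (Hf a) : pred_ea).
Proof.
  intros Hf1 Hsum. split.
  - apply elt_eq. exact Hf1.
  - intros a b c H. apply elt_sum_some, Hsum, H.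
Qed.

End PredEffectAlgebra.

Section Interval.
Variables (F : EffectAlgebra) (k : F).

Definition interval_sum (x y : F) : option F :=
  match ea_sum x y with
  | Some z => if excluded_middle_informative (ea_le z k) then Some z else None
  | None => None
  end.

Definition interval_compl (x : F) : F :=
  epsilon (inhabits ea_zero) (fun z => ea_sum x z = Some k).

Lemma interval_sum_some (x y z : F) :
  interval_sum x y = Some z <-> ea_sum x y = Some z /\ ea_le z k.
Proof.
  unfold interval_sum. destruct (ea_sum x y) as [w|].
  - destruct (excluded_middle_informative (ea_le w k)); split.
    + intro H. injection H as <-. auto.
    + intros [H _]. congruence.
    + discriminate.
    + intros [H Hle]. injection H as <-. contradiction.
  - split; [discriminate | intros [H _]; discriminate].
Qed.

Lemma interval_compl_spec (x : F) : ea_le x k -> ea_sum x (interval_compl x) = Some k.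
Proof. apply (epsilon_spec (inhabits ea_zero) (fun z => ea_sum x z = Some k)). Qed.

Definition interval_pred : PredEA.
Proof.
  refine {| pe_car := F; pe_mem := fun x => ea_le x k; pe_sum := interval_sum;
            pe_compl := interval_compl; pe_zero := ea_zero; pe_one := k |}.
  - apply ea_le0x.
  - apply ea_le_refl.
  - intros x Hx. exact (ea_le_sum_r (interval_compl_spec Hx)).
  - intros x y z _ _ Hz. apply interval_sum_some in Hz. apply Hz.
  - intros x y. unfold interval_sum. rewrite ea_comm. reflexivity.
  - intros x y w a v _ _ _ Ha Hv.
    apply interval_sum_some in Ha as [Ha _]. apply interval_sum_some in Hv as [Hv Hvk].
    destruct (sum_assoc_fwd Ha Hv) as (b & Hb & Hxb).
    exists b. rewrite !interval_sum_some.
    split; split; try assumption. exact (ea_le_trans (ea_le_sum_r Hxb) Hvk).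
  - intros x y Hx _. rewrite interval_sum_some. split.
    + intros [H _]. exact (sum_cancel_l H (interval_compl_spec Hx)).
    + intros ->. split; [exact (interval_compl_spec Hx) | apply ea_le_refl].
  - intros x _. split.
    + intro Hdef. destruct (interval_sum x k) as [w|] eqn:Hw; [|congruence].
      apply interval_sum_some in Hw as [Hw Hwk].
      assert (w = k) as -> by exact (ea_le_antisym Hwk (ea_le_sum_r Hw)).
      rewrite ea_comm in Hw. symmetry. exact (sum_cancel_l (sum_zero_r k) Hw).
    + intros ->. replace (interval_sum ea_zero k) with (Some k); [discriminate |].
      symmetry. apply interval_sum_some. split; [apply sum_zero_l | apply ea_le_refl].
Defined.

Definition interval : EffectAlgebra := pred_ea interval_pred.

Lemma interval_val_additive : additive (fun x : interval => proj1_sig x).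
Proof.
  intros x y z H. apply elt_sum_some, interval_sum_some in H. apply H.
Qed.

Lemma interval_lift_hom (A : EffectAlgebra) (f : A -> F) (Hle : forall a, ea_le (f a) k) :
  additive f -> f ea_one = k -> is_hom (fun a => exist _ (f a) (Hle a) : interval).
Proof.
  intros Hf Hf1. apply (pred_ea_hom (P := interval_pred)); [exact Hf1 |].
  intros a b c H. apply interval_sum_some. split; [apply Hf, H | apply Hle].
Qed.

End Interval.

Lemma additive_pointwise_sum (A B : EffectAlgebra) (f1 f2 : A -> B) (k : B) :
  additive f1 -> additive f2 -> ea_sum (f1 ea_one) (f2 ea_one) = Some k ->
  exists f : A -> B, additive f /\ f ea_one = k /\ forall a, ea_sum (f1 a) (f2 a) = Some (f a).
Proof.
  intros Hf1 Hf2 Hk.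
  assert (Hdef : forall a, exists z, ea_sum (f1 a) (f2 a) = Some z).
  { intro a. exact (sum_defined_below (additive_le_one a Hf1) (additive_le_one a Hf2) Hk). }
  destruct (choice _ Hdef) as (f & Hf).
  exists f. split; [|split; [congruence | exact Hf]].
  intros a b c H.
  destruct (sum_shuffle (Hf1 _ _ _ H) (Hf2 _ _ _ H) (Hf c)) as (p & q & Hp & Hq & Hpq).
  rewrite Hf in Hp, Hq. injection Hp as <-. injection Hq as <-. exact Hpq.
Qed.

(* A colimit in EA is also universal for maps that are merely additive with a
   prescribed value [k] at 1: these are the homomorphisms into [interval k]. *)
Section ColimitAdditive.
Variables (D : SmallCategory) (Fo : Obj D -> EffectAlgebra)
  (Fm : forall a b, Hom a b -> Fo a -> Fo b) (G : EffectAlgebra) (c : forall d, Fo d -> G).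
Arguments c : clear implicits.
Arguments Fm : clear implicits.
Hypothesis c_colimit : is_colimit Fm c.
Variables (A : EffectAlgebra) (k : A).

Lemma colimit_additive_exists (phi : forall d, Fo d -> A) :
  (forall d, additive (phi d)) -> (forall d, phi d ea_one = k) ->
  (forall a b (f : Hom a b) x, phi b (Fm a b f x) = phi a x) ->
  exists psi : G -> A, additive psi /\ psi ea_one = k /\ forall d x, psi (c d x) = phi d x.
Proof.
  intros Hphi Hphi1 Hphic.
  assert (Hle : forall d x, ea_le (phi d x) k).
  { intros d x. rewrite <- (Hphi1 d). apply additive_le_one, Hphi. }
  destruct (proj2 c_colimit (interval k) (fun d x => exist _ (phi d x) (Hle d x)))
    as (u & [Hu1 Hu] & Huc & _).
  { split.
    - intro d. exact (interval_lift_hom (Hle d) (Hphi d) (Hphi1 d)).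
    - intros a b f x. apply elt_eq. apply Hphic. }
  exists (fun y => proj1_sig (u y)). split; [|split].
  - intros y1 y2 y3 H. apply interval_val_additive, Hu, H.
  - rewrite Hu1. reflexivity.
  - intros d x. rewrite Huc. reflexivity.
Qed.

Lemma colimit_additive_unique (psi1 psi2 : G -> A) :
  additive psi1 -> additive psi2 -> psi1 ea_one = k -> psi2 ea_one = k ->
  (forall d x, psi1 (c d x) = psi2 (c d x)) -> forall y, psi1 y = psi2 y.
Proof.
  intros Hpsi1 Hpsi2 Hpsi1k Hpsi2k Hagree y.
  assert (Hle1 : forall y, ea_le (psi1 y) k).
  { intro y'. rewrite <- Hpsi1k. apply additive_le_one, Hpsi1. }
  assert (Hle2 : forall y, ea_le (psi2 y) k).
  { intro y'. rewrite <- Hpsi2k. apply additive_le_one, Hpsi2. }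
  pose proof (interval_lift_hom Hle1 Hpsi1 Hpsi1k) as Hl1.
  pose proof (interval_lift_hom Hle2 Hpsi2 Hpsi2k) as Hl2.
  destruct c_colimit as [[Hc Hcc] Huniv].
  destruct (Huniv (interval k) (fun d x => exist _ (psi2 (c d x)) (Hle2 (c d x))))
    as (u & _ & _ & Hu).
  { split.
    - intro d. exact (hom_comp (Hc d) Hl2).
    - intros a b f x. apply elt_eq. simpl. rewrite Hcc. reflexivity. }
  assert (Hy : exist _ (psi1 y) (Hle1 y) = exist _ (psi2 y) (Hle2 y) :> interval k).
  { rewrite (Hu _ Hl1), (Hu _ Hl2); [reflexivity | reflexivity |].
    intros d x. apply elt_eq. apply Hagree. }
  exact (f_equal (@proj1_sig _ _) Hy).
Qed.

End ColimitAdditive.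

Lemma zigzag_trans (D : SmallCategory) (a b c : Obj D) :
  zigzag a b -> zigzag b c -> zigzag a c.
Proof.
  induction 1 as [a | a b' b f _ IH | a b' b f _ IH]; intro Hbc.
  - exact Hbc.
  - exact (zz_fwd f (IH Hbc)).
  - exact (zz_bwd f (IH Hbc)).
Qed.

Section TensorImage.
Variables (D : SmallCategory) (E : EffectAlgebra) (F : Diagram D) (G : EffectAlgebra)
  (c : forall d, dobj F d -> G).
Arguments c : clear implicits.
Hypothesis c_colimit : is_colimit (fun a b f => dmap F f) c.
Variables (TF : Obj D -> EffectAlgebra) (tF : forall d, E -> dobj F d -> TF d).
Arguments tF : clear implicits.
Hypothesis tF_tensor : forall d, is_tensor (tF d).
Variables (TG : EffectAlgebra) (tG : E -> G -> TG).
Hypothesis tG_tensor : is_tensor tG.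
Variable m : forall a b, Hom a b -> TF a -> TF b.
Arguments m : clear implicits.
Hypothesis m_hom : forall a b (f : Hom a b), is_hom (m a b f).
Hypothesis m_tensor : forall a b (f : Hom a b) e x, m a b f (tF a e x) = tF b e (dmap F f x).
Variable h : forall d, TF d -> TG.
Arguments h : clear implicits.
Hypothesis h_hom : forall d, is_hom (h d).
Hypothesis h_tensor : forall d e x, h d (tF d e x) = tG e (c d x).

Lemma tensor_image_cocone : is_cocone m h.
Proof.
  destruct c_colimit as [[_ Hc] _].
  split; [exact h_hom |].
  intros a b f z.
  apply (tensor_hom_ext (tF_tensor a) (hom_comp (m_hom f) (h_hom b)) (h_hom a)).
  intros e x. rewrite m_tensor, !h_tensor, Hc. reflexivity.
Qed.

Section Cocone.
Variables (A : EffectAlgebra) (c' : forall d, TF d -> A).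
Arguments c' : clear implicits.
Hypothesis c'_cocone : is_cocone m c'.

Lemma unit_slice_zigzag a b e :
  zigzag a b -> c' a (tF a e ea_one) = c' b (tF b e ea_one).
Proof.
  destruct c'_cocone as [_ Hc'].
  assert (Hstep : forall a b (f : Hom a b), c' a (tF a e ea_one) = c' b (tF b e ea_one)).
  { intros a' b' f. rewrite <- (proj1 (dmap_hom F f)), <- m_tensor, Hc'. reflexivity. }
  induction 1 as [a | a b' b f _ IH | a b' b f _ IH].
  - reflexivity.
  - rewrite (Hstep _ _ f). exact IH.
  - rewrite <- (Hstep _ _ f). exact IH.
Qed.

Definition induces (g : E -> G -> A) : Prop :=
  forall d e x, g e (c d x) = c' d (tF d e x).

Lemma inducing_bihom_exists (k : E -> A) :
  is_hom k -> (forall d e, c' d (tF d e ea_one) = k e) ->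
  exists g, is_bihom g /\ induces g.
Proof.
  intros [Hk1 Hk] Hslice.
  destruct c'_cocone as [Hc'hom Hc'].
  assert (Hslices : forall e, exists ge : G -> A, additive ge /\ ge ea_one = k e /\
                      forall d x, ge (c d x) = c' d (tF d e x)).
  { intro e. apply (colimit_additive_exists c_colimit).
    - intro d. intros x1 x2 x3 H. apply Hc'hom, (bihom_additive_r e (proj1 (tF_tensor d))), H.
    - intro d. apply Hslice.
    - intros a b f x. rewrite <- m_tensor. apply Hc'. }
  destruct (choice _ Hslices) as (g & Hg).
  exists g. split; [split; [|split] | intros d e x; apply Hg].
  - intros y e1 e2 e3 He.
    destruct (Hg e1) as (Hg1 & Hg1k & Hg1c). destruct (Hg e2) as (Hg2 & Hg2k & Hg2c).
    destruct (Hg e3) as (Hg3 & Hg3k & Hg3c).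
    assert (Hk12 : ea_sum (g e1 ea_one) (g e2 ea_one) = Some (k e3)).
    { rewrite Hg1k, Hg2k. apply Hk, He. }
    (* [g e1 + g e2] and [g e3] factor the same cocone through [G] *)
    destruct (additive_pointwise_sum Hg1 Hg2 Hk12) as (s & Hs & Hs1 & Hsum).
    rewrite Hsum. f_equal.
    apply (colimit_additive_unique c_colimit Hs Hg3 Hs1 Hg3k). intros d x.
    assert (Hd : ea_sum (g e1 (c d x)) (g e2 (c d x)) = Some (g e3 (c d x))).
    { rewrite Hg1c, Hg2c, Hg3c. apply Hc'hom, (proj1 (proj1 (tF_tensor d))), He. }
    rewrite Hsum in Hd. congruence.
  - intro e. apply Hg.
  - rewrite (proj1 (proj2 (Hg ea_one))). exact Hk1.
Qed.

End Cocone.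

Lemma tensor_image_colimit :
  (forall (A : EffectAlgebra) (c' : forall d, TF d -> A), is_cocone m c' ->
     exists k : E -> A, is_hom k /\ (forall d e, c' d (tF d e ea_one) = k e) /\
       forall g, is_bihom g -> induces c' g -> forall e, g e ea_one = k e) ->
  is_colimit m h.
Proof.
  intro Hunit. split; [exact tensor_image_cocone |].
  intros A c' Hc'. destruct (Hunit A c' Hc') as (k & Hk & Hslice & Hk_unique).
  destruct (inducing_bihom_exists Hc' Hk Hslice) as (g & Hg & Hg_ind).
  destruct (proj2 tG_tensor A g Hg) as (u & Hu & Hut & _).
  exists u. split; [exact Hu | split].
  - intros d z. apply (tensor_hom_ext (tF_tensor d) (hom_comp (h_hom d) Hu) (proj1 Hc' d)).
    intros e x. rewrite h_tensor, Hut. apply Hg_ind.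
  - intros u' Hu' Hu'c.
    apply (tensor_hom_ext tG_tensor Hu' Hu). intros e y. rewrite Hut.
    pose proof (bihom_post Hu' (proj1 tG_tensor)) as Hg'.
    assert (Hg'_ind : induces c' (fun e y => u' (tG e y))).
    { intros d e' x. rewrite <- h_tensor. apply Hu'c. }
    apply (colimit_additive_unique c_colimit
             (psi1 := fun y => u' (tG e y)) (psi2 := g e) (k := k e)).
    + exact (bihom_additive_r e Hg').
    + exact (bihom_additive_r e Hg).
    + exact (Hk_unique _ Hg' Hg'_ind e).
    + exact (Hk_unique _ Hg Hg_ind e).
    + intros d x. rewrite Hg_ind. apply Hg'_ind.
Qed.

End TensorImage.

Lemma tensor_preserves_connected (D : SmallCategory) (E : EffectAlgebra) :
  connected D -> tensor_preserves_colimits_over E D.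
Proof.
  intros [[d0] Hzz] F G c Hc TF tF HtF TG tG HtG m Hm Hmt h Hh Hht.
  apply (tensor_image_colimit Hc HtF HtG Hm Hmt Hh Hht).
  intros A c' Hc'.
  exists (fun e => c' d0 (tF d0 e ea_one)). split; [|split].
  - exact (hom_comp (bihom_hom_l (proj1 (HtF d0))) (proj1 Hc' d0)).
  - intros d e. apply (unit_slice_zigzag Hmt Hc'). apply Hzz.
  - intros g _ Hg e. rewrite <- (proj1 (proj1 (proj1 Hc) d0)). apply Hg.
Qed.

Lemma tensor_preserves_iso_two (D : SmallCategory) (E : EffectAlgebra) :
  ea_iso E two -> tensor_preserves_colimits_over E D.
Proof.
  intros Hiso F G c Hc TF tF HtF TG tG HtG m Hm Hmt h Hh Hht.
  apply (tensor_image_colimit Hc HtF HtG Hm Hmt Hh Hht).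
  intros A c' Hc'.
  pose proof Hiso as (phi & _ & Hphi & _).
  exists (fun e => two_to A (phi e)). split; [|split].
  - exact (hom_comp Hphi (two_to_hom A)).
  - intros d e. apply (iso_two_hom_unique (f := fun e => c' d (tF d e ea_one))
                                     (g := fun e => two_to A (phi e)) Hiso).
    2: exact (hom_comp Hphi (two_to_hom A)).
    exact (hom_comp (bihom_hom_l (proj1 (HtF d))) (proj1 Hc' d)).
  - intros g Hg _ e.
    apply (iso_two_hom_unique (g := fun e => two_to A (phi e)) Hiso (bihom_hom_l Hg)).
    exact (hom_comp Hphi (two_to_hom A)).
Qed.

Lemma tensor_preserves_iso_one (D : SmallCategory) (E : EffectAlgebra) :
  ea_iso E one -> inhabited (Obj D) -> tensor_preserves_colimits_over E D.
Proof.
  intros Hiso [d0] F G c Hc TF tF HtF TG tG HtG m Hm Hmt h Hh Hht.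
  apply (tensor_image_colimit Hc HtF HtG Hm Hmt Hh Hht).
  intros A c' Hc'.
  assert (HTF : ea_zero = (ea_one : TF d0)).
  { exact (hom_trivial (bihom_hom_l (proj1 (HtF d0))) (trivial_of_iso_one Hiso)). }
  pose proof (hom_trivial (proj1 Hc' d0) HTF) as HA.
  exists (fun _ => ea_one). split; [|split].
  - exact (hom_into_trivial _ HA).
  - intros d e. apply (trivial_eq HA).
  - intros g _ _ e. apply (trivial_eq HA).
Qed.

Section HorizontalSum.
Variable E : EffectAlgebra.
Implicit Types x y z w : E.

Definition proper x : bool :=
  if excluded_middle_informative (x <> ea_zero /\ x <> ea_one) then true else false.

Lemma proper_true x : proper x = true <-> x <> ea_zero /\ x <> ea_one.
Proof. unfold proper. destruct (excluded_middle_informative _); split; tauto || discriminate. Qed.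

Lemma proper_false x : proper x = false -> x = ea_zero \/ x = ea_one.
Proof.
  unfold proper. destruct (excluded_middle_informative _) as [|Hx]; [discriminate |].
  intros _. apply NNPP. tauto.
Qed.

Lemma proper_zero : proper ea_zero = false.
Proof. apply not_true_is_false. rewrite proper_true. tauto. Qed.

Lemma proper_one : proper ea_one = false.
Proof. apply not_true_is_false. rewrite proper_true. tauto. Qed.

Lemma proper_compl x : proper (ea_compl x) = proper x.
Proof.
  destruct (proper x) eqn:Hx.
  - apply proper_true in Hx as [Hx0 Hx1]. apply proper_true. split; intro H.
    + apply Hx1. rewrite <- (complK x), H. apply compl_zero.
    + apply Hx0. rewrite <- (complK x), H. apply compl_one.
  - destruct (proper_false Hx) as [-> | ->].
    + rewrite compl_zero. apply proper_one.
    + rewrite compl_one. apply proper_zero.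
Qed.

Lemma proper_sum x y z :
  proper x = false -> proper y = false -> ea_sum x y = Some z -> proper z = false.
Proof.
  intros Hx Hy Hz.
  destruct (proper_false Hx) as [-> | ->].
  - rewrite sum_zero_l in Hz. injection Hz as <-. exact Hy.
  - rewrite (sum_one_l Hz), sum_zero_r in Hz. injection Hz as <-. apply proper_one.
Qed.

(* Two copies of [E] glued along 0 and 1: a proper element [x] occurs as [(x, false)]
   in the first copy and as [(x, true)] in the second; improper ones carry [false]. *)
Definition hs_mem (p : E * bool) : Prop := snd p = true -> proper (fst p) = true.

Definition on_side (s : bool) (p : E * bool) : Prop := proper (fst p) = true -> snd p = s.

Definition hs_compatible (p q : E * bool) : Prop := exists s, on_side s p /\ on_side s q.

Definition hs_sum (p q : E * bool) : option (E * bool) :=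
  match ea_sum (fst p) (fst q) with
  | Some z =>
      if excluded_middle_informative (hs_compatible p q)
      then Some (z, (snd p || snd q) && proper z) else None
  | None => None
  end.

Lemma hs_mem_improper x t : hs_mem (x, t) -> proper x = false -> t = false.
Proof. unfold hs_mem; simpl. destruct t; [intros H Hx; rewrite H in Hx | ]; auto. Qed.

Lemma on_side_improper s x t : proper x = false -> on_side s (x, t).
Proof. unfold on_side; simpl. congruence. Qed.

Lemma on_side_tag s x : on_side s (x, s && proper x).
Proof. unfold on_side; simpl. intros ->. apply andb_true_r. Qed.

Lemma hs_sum_on_side s x t y u z :
  hs_mem (x, t) -> hs_mem (y, u) -> on_side s (x, t) -> on_side s (y, u) ->
  ea_sum x y = Some z -> hs_sum (x, t) (y, u) = Some (z, s && proper z).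
Proof.
  intros Hxt Hyu Hsx Hsy Hz. unfold hs_sum; simpl. rewrite Hz.
  destruct (excluded_middle_informative _) as [_ | Hnc]; [| exfalso; apply Hnc; exists s; auto].
  do 2 f_equal. destruct (proper z) eqn:Hpz; [|rewrite !andb_false_r; reflexivity].
  rewrite !andb_true_r. unfold on_side in Hsx, Hsy; simpl in Hsx, Hsy.
  destruct (proper x) eqn:Hpx, (proper y) eqn:Hpy.
  - rewrite (Hsx eq_refl), (Hsy eq_refl). apply orb_diag.
  - rewrite (Hsx eq_refl), (hs_mem_improper Hyu Hpy). apply orb_false_r.
  - rewrite (hs_mem_improper Hxt Hpx), (Hsy eq_refl). reflexivity.
  - rewrite (proper_sum Hpx Hpy Hz) in Hpz. discriminate.
Qed.

Lemma hs_sum_inv p q r : hs_mem p -> hs_mem q -> hs_sum p q = Some r ->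
  exists s, on_side s p /\ on_side s q /\
    ea_sum (fst p) (fst q) = Some (fst r) /\ snd r = s && proper (fst r).
Proof.
  destruct p as [x t], q as [y u]. intros Hxt Hyu Hr.
  pose proof Hr as Hdef. unfold hs_sum in Hdef; simpl in Hdef.
  destruct (ea_sum x y) as [z|] eqn:Hz; [|discriminate].
  destruct (excluded_middle_informative _) as [(s & Hsx & Hsy) |]; [|discriminate].
  exists s. rewrite (hs_sum_on_side Hxt Hyu Hsx Hsy Hz) in Hr. injection Hr as <-.
  simpl. auto.
Qed.

Lemma hs_sum_mem p q r : hs_mem p -> hs_mem q -> hs_sum p q = Some r -> hs_mem r.
Proof.
  intros Hp Hq Hr. apply hs_sum_inv in Hr as (s & _ & _ & _ & Hv); auto.
  intro H. rewrite H in Hv. symmetry in Hv. apply andb_true_iff in Hv. apply Hv.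
Qed.

Lemma hs_assoc p q r a v : hs_mem p -> hs_mem q -> hs_mem r ->
  hs_sum p q = Some a -> hs_sum a r = Some v ->
  exists b, hs_sum q r = Some b /\ hs_sum p b = Some v.
Proof.
  destruct p as [x t], q as [y u], r as [w o], a as [a ta], v as [v tv].
  intros Hxt Hyu Hwo Ha Hv.
  pose proof (hs_sum_mem Hxt Hyu Ha) as Hma.
  apply hs_sum_inv in Ha as (s1 & Hs1x & Hs1y & Ha & Hta); auto.
  apply hs_sum_inv in Hv as (s2 & Hs2a & Hs2w & Hv & Htv); auto.
  simpl in *. subst ta tv.
  assert (Hside : exists s, on_side s (x, t) /\ on_side s (y, u) /\ on_side s (w, o) /\
                            s2 && proper v = s && proper v).
  { destruct (proper a) eqn:Hpa.
    - assert (s1 = s2) as <-.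
      { pose proof (Hs2a Hpa) as H. simpl in H. rewrite andb_true_r in H. exact H. }
      exists s1. auto.
    - destruct (proper_false Hpa) as [-> | ->].
      + pose proof (sum_eq_zero_l Ha) as ->. rewrite sum_zero_l in Ha. injection Ha as ->.
        exists s2. repeat split; auto; apply on_side_improper, proper_zero.
      + pose proof (sum_one_l Hv) as ->. rewrite sum_zero_r in Hv. injection Hv as <-.
        exists s1. rewrite proper_one, !andb_false_r.
        repeat split; auto. apply on_side_improper, proper_zero. }
  destruct Hside as (s & Hsx & Hsy & Hsw & Htag).
  destruct (sum_assoc_fwd Ha Hv) as (b & Hb & Hxb).
  exists (b, s && proper b). split.
  - exact (hs_sum_on_side Hyu Hwo Hsy Hsw Hb).
  - rewrite Htag. apply (hs_sum_on_side Hxt); auto; [|apply on_side_tag].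
    intro H. apply andb_true_iff in H. apply H.
Qed.

Lemma hs_sum_comm p q : hs_sum p q = hs_sum q p.
Proof.
  destruct p as [x t], q as [y u]. unfold hs_sum; simpl. rewrite ea_comm, orb_comm.
  destruct (ea_sum y x); [|reflexivity].
  destruct (excluded_middle_informative (hs_compatible (x, t) (y, u))) as [[s Hs]|Hn1],
    (excluded_middle_informative (hs_compatible (y, u) (x, t))) as [[s' Hs']|Hn2];
    try reflexivity; exfalso; [apply Hn2; exists s | apply Hn1; exists s']; tauto.
Qed.

Lemma hs_compl_spec p q : hs_mem p -> hs_mem q ->
  hs_sum p q = Some (ea_one, false) <-> q = (ea_compl (fst p), snd p).
Proof.
  destruct p as [x t], q as [y u]. intros Hxt Hyu; simpl. split.
  - intro H. apply hs_sum_inv in H as (s & Hsx & Hsy & Hxy & _); auto. simpl in *.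
    apply compl_eq in Hxy as ->. f_equal.
    unfold on_side in Hsx, Hsy; simpl in Hsx, Hsy. rewrite proper_compl in Hsy.
    destruct (proper x) eqn:Hpx.
    + rewrite (Hsx eq_refl), (Hsy eq_refl). reflexivity.
    + rewrite (hs_mem_improper Hxt Hpx). apply (hs_mem_improper Hyu).
      rewrite proper_compl. exact Hpx.
  - intro H. injection H as -> ->.
    rewrite (hs_sum_on_side (s := t) (z := ea_one) Hxt Hyu); try (unfold on_side; auto).
    + rewrite proper_one, andb_false_r. reflexivity.
    + apply sum_compl.
Qed.

Lemma hs_zero_one p : hs_mem p -> hs_sum p (ea_one, false) <> None <-> p = (ea_zero, false).
Proof.
  destruct p as [x t]. intro Hxt. split.
  - intro Hdef. destruct (hs_sum (x, t) (ea_one, false)) as [r|] eqn:Hr; [|congruence].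
    apply hs_sum_inv in Hr as (_ & _ & _ & Hr & _); [|exact Hxt | discriminate].
    simpl in Hr. assert (x = ea_zero) as -> by (apply ea_zero_one; congruence).
    rewrite (hs_mem_improper Hxt proper_zero). reflexivity.
  - intro H. injection H as -> ->.
    rewrite (hs_sum_on_side (s := false) (z := ea_one)); try discriminate.
    + apply on_side_improper, proper_zero.
    + apply on_side_improper, proper_one.
    + apply sum_zero_l.
Qed.

Definition hs_pred : PredEA.
Proof.
  refine {| pe_car := E * bool; pe_mem := hs_mem; pe_sum := hs_sum;
            pe_compl := fun p => (ea_compl (fst p), snd p);
            pe_zero := (ea_zero, false); pe_one := (ea_one, false);
            pe_mem_sum := hs_sum_mem; pe_comm := hs_sum_comm; pe_assoc := hs_assoc;
            pe_compl_spec := hs_compl_spec; pe_zero_one := hs_zero_one |}.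
  - discriminate.
  - discriminate.
  - intros [x t] Hxt Ht. simpl in *. rewrite proper_compl. exact (Hxt Ht).
Defined.

(* The horizontal sum of [E] with itself, i.e. its coproduct with itself in EA. *)
Definition hsum : EffectAlgebra := pred_ea hs_pred.

Lemma hs_mem_tag s x : hs_mem (x, s && proper x).
Proof. intro H. apply andb_true_iff in H. apply H. Qed.

Definition hs_inj (s : bool) (x : E) : hsum := exist _ (x, s && proper x) (@hs_mem_tag s x).

Lemma hs_inj_hom s : is_hom (hs_inj s).
Proof.
  apply (pred_ea_hom (P := hs_pred)).
  - simpl. rewrite proper_one, andb_false_r. reflexivity.
  - intros x y z Hz. apply hs_sum_on_side; auto using hs_mem_tag, on_side_tag.
Qed.

Lemma hs_inj_proper x : proper x = true -> hs_inj false x <> hs_inj true x.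
Proof.
  intros Hx H. apply (f_equal (fun p => snd (proj1_sig p))) in H. simpl in H.
  rewrite Hx in H. discriminate.
Qed.

End HorizontalSum.

Definition const_diagram (D : SmallCategory) (A : EffectAlgebra) : Diagram D.
Proof.
  refine {| dobj := fun _ => A; dmap := fun _ _ _ x => x |}.
  - intros. apply hom_id.
  - reflexivity.
  - reflexivity.
Defined.

Lemma const_two_colimit (D : SmallCategory) :
  is_colimit (fun a b f => dmap (const_diagram D two) f) (fun _ (x : two) => x).
Proof.
  split; [split; [intro; apply hom_id | reflexivity] |].
  intros A c' [Hc' _]. exists (two_to A). split; [apply two_to_hom | split].
  - intros d x. symmetry. exact (two_hom_unique (Hc' d) x).
  - intros u Hu _ z. exact (two_hom_unique Hu z).
Qed.

Definition tensor_two (E : EffectAlgebra) (e : E) (b : two) : E := if b then e else ea_zero.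

Lemma tensor_two_tensor (E : EffectAlgebra) : is_tensor (@tensor_two E).
Proof.
  assert (Ht : is_bihom (@tensor_two E)).
  { split; [|split].
    - intros [|] a b c H; [exact H | apply sum_zero_r].
    - intros e [|] [|] c H; simpl in H; try discriminate; injection H as <-; simpl.
      + apply sum_zero_r.
      + apply sum_zero_l.
      + apply sum_zero_r.
    - reflexivity. }
  split; [exact Ht |].
  intros A g Hg. exists (fun e => g e true). split; [split | split].
  - apply Hg.
  - intros a b c H. exact (proj1 Hg true a b c H).
  - intros e [|]; [reflexivity |].
    simpl. rewrite (bihom_zero_l _ Hg). symmetry. exact (additive_zero (proj1 (proj2 Hg) e)).
  - intros u _ Hu z. exact (Hu z true).
Qed.

Lemma const_colimit_of_preserves (D : SmallCategory) (E : EffectAlgebra) :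
  tensor_preserves_colimits_over E D ->
  is_colimit (fun a b f => dmap (const_diagram D E) f) (fun _ (x : E) => x).
Proof.
  intro Hpres.
  exact (Hpres (const_diagram D two) two (fun _ x => x) (const_two_colimit D)
            (fun _ => E) (fun _ => @tensor_two E) (fun _ => tensor_two_tensor E)
            E (@tensor_two E) (tensor_two_tensor E)
            (fun a b f => dmap (const_diagram D E) f) (fun _ _ _ => hom_id E)
            (fun _ _ _ _ _ => eq_refl) (fun _ x => x) (fun _ => hom_id E) (fun _ _ _ => eq_refl)).
Qed.

Lemma const_colimit_empty (D : SmallCategory) (E : EffectAlgebra) :
  ~ inhabited (Obj D) ->
  is_colimit (fun a b f => dmap (const_diagram D E) f) (fun _ (x : E) => x) -> ea_iso E two.
Proof.
  intros Hempty [_ Huniv].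
  assert (Hvac : forall (A : EffectAlgebra) (c' : Obj D -> E -> A),
            is_cocone (fun a b f => dmap (const_diagram D E) f) c').
  { intros A c'. split; intro d; exfalso; exact (Hempty (inhabits d)). }
  destruct (Huniv two (fun d => match Hempty (inhabits d) with end) (Hvac _ _))
    as (u & Hu & _).
  destruct (Huniv E (fun _ x => x) (Hvac _ _)) as (idE & _ & _ & HidE).
  exists u, (two_to E). split; [exact Hu | split; [apply two_to_hom | split]].
  - intro x.
    rewrite (HidE (fun x => two_to E (u x)) (hom_comp Hu (two_to_hom E))),
            (HidE (fun x => x) (hom_id E)); try reflexivity;
      intro d; exfalso; exact (Hempty (inhabits d)).
  - intro b. rewrite (two_hom_unique (hom_comp (two_to_hom E) Hu)). destruct b; reflexivity.
Qed.

Definition side_of (D : SmallCategory) (a d : Obj D) : bool :=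
  if excluded_middle_informative (zigzag a d) then false else true.

Lemma side_of_hom (D : SmallCategory) (a d1 d2 : Obj D) :
  Hom d1 d2 -> side_of a d2 = side_of a d1.
Proof.
  intro f. unfold side_of.
  destruct (excluded_middle_informative (zigzag a d2)) as [Z2 | Z2],
    (excluded_middle_informative (zigzag a d1)) as [Z1 | Z1]; try reflexivity; exfalso.
  - exact (Z1 (zigzag_trans Z2 (zz_bwd f (zz_refl d1)))).
  - exact (Z2 (zigzag_trans Z1 (zz_fwd f (zz_refl d2)))).
Qed.

(* Sending the component of [a] to one copy of [E] and the rest of [D] to the other
   gives a cocone into the horizontal sum that cannot factor through [E]. *)
Lemma const_colimit_disconnected (D : SmallCategory) (E : EffectAlgebra) (a b : Obj D) :
  ~ zigzag a b ->
  is_colimit (fun a b f => dmap (const_diagram D E) f) (fun _ (x : E) => x) ->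
  forall x : E, proper x = false.
Proof.
  intros Hab [_ Huniv] x. apply not_true_is_false. intro Hx.
  destruct (Huniv (hsum E) (fun d => hs_inj (side_of a d))) as (u & _ & Hu & _).
  { split; [intro d; apply hs_inj_hom |].
    intros d1 d2 f y. simpl. rewrite (side_of_hom a f). reflexivity. }
  assert (Ha : side_of a a = false).
  { unfold side_of. destruct (excluded_middle_informative _) as [|Haa]; [reflexivity |].
    destruct (Haa (zz_refl a)). }
  assert (Hb : side_of a b = true).
  { unfold side_of. destruct (excluded_middle_informative _); [contradiction | reflexivity]. }
  pose proof (Hu a x) as Hua. pose proof (Hu b x) as Hub. rewrite Ha in Hua. rewrite Hb in Hub.
  apply (hs_inj_proper Hx). simpl in Hua, Hub. congruence.
Qed.

Lemma disconnected_pair (D : SmallCategory) :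
  inhabited (Obj D) -> ~ connected D -> exists a b : Obj D, ~ zigzag a b.
Proof.
  intros Hinh Hnc. apply NNPP. intro Hall. apply Hnc. split; [exact Hinh |].
  intros a b. apply NNPP. intro Hab. apply Hall. eauto.
Qed.

Theorem theorem3p5 (D : SmallCategory) (E : EffectAlgebra) :
  tensor_preserves_colimits_over E D <->
  (connected D \/ ea_iso E two \/ (ea_iso E one /\ inhabited (Obj D))).
Proof.
  split.
  - intro Hpres. pose proof (const_colimit_of_preserves Hpres) as Hcol.
    destruct (classic (connected D)) as [Hconn | Hnconn]; [left; exact Hconn | right].
    destruct (classic (inhabited (Obj D))) as [Hinh | Hempty].
    + destruct (disconnected_pair Hinh Hnconn) as (a & b & Hab).
      pose proof (const_colimit_disconnected Hab Hcol) as Himproper.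
      destruct (classic (ea_zero = (ea_one : E))) as [H01 | H01].
      * right. exact (conj (iso_one_of_trivial H01) Hinh).
      * left. apply (iso_two_of_bivalent H01). intro x. exact (proper_false (Himproper x)).
    + left. exact (const_colimit_empty Hempty Hcol).
  - intros [Hconn | [Htwo | [Hone Hinh]]].
    + exact (tensor_preserves_connected Hconn).
    + exact (tensor_preserves_iso_two Htwo).
    + exact (tensor_preserves_iso_one Hone Hinh).
Qed.
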